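(* Let $\Gamma=(V,E)$ be a reflexive, locally finite, $k$-separable graph with $k\ge2$. Let $A,F$ be $k$-fragments of $\Gamma$ such that $|A|\le|F^{\curlywedge}|$ and $|A\cap F|\ge k-1$. Then $$|A\cap\partial(F)|\le|\partial(A)\cap F^{\curlywedge}|,\qquad |\Gamma(A)\cap\Gamma(F)|\le|A\cap F|+\kappa_k(\Gamma),$$ and $$|F^{\curlywedge}\setminus A^{\curlywedge}|\le|A\setminus F|+\kappa_k(\Gamma)-\kappa_{k-1}(\Gamma).$$
   Context: A graph is a pair $\Gamma=(V,E)$ with $E\subseteq V\times V$; reflexive means $(x,x)\in E$ for all $x$; locally finite means each $\Gamma(x)=\{y:(x,y)\in E\}$ is finite. For $A\subseteq V$: $\Gamma(A)=\bigcup_{x\in A}\Gamma(x)$, $\partial(A)=\Gamma(A)\setminus A$, $A^{\curlywedge}=V\setminus(A\cup\Gamma(A))$. $\Gamma$ is $j$-separable if some finite $X$ has $|X|\ge j$ and $|V\setminus\Gamma(X)|\ge j$; then $\kappa_j(\Gamma)=\min\{|\partial(X)|: X\text{ finite},|X|\ge j,|V\setminus\Gamma(X)|\ge j\}$, and a $j$-fragment is a finite $X$ with $|X|\ge j$, $|V\setminus\Gamma(X)|\ge j$ and $|\partial(X)|=\kappa_j(\Gamma)$. (A $k$-separable graph is also $(k-1)$-separable.) *)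

From Stdlib Require Import List Arith ClassicalEpsilon.
Import ListNotations.

Section Graphs.
Context {V : Type}.

Definition fin (S : V -> Prop) : Prop := exists l : list V, forall x, S x <-> In x l.
Definition is_card (S : V -> Prop) (n : nat) : Prop :=
  exists l : list V, NoDup l /\ length l = n /\ forall x, S x <-> In x l.
(* |S| >= n, meaningful also for infinite S *)
Definition card_ge (S : V -> Prop) (n : nat) : Prop :=
  exists l : list V, NoDup l /\ length l = n /\ forall x, In x l -> S x.
(* cardinality of a finite set (junk value if S is infinite) *)
Definition ncard (S : V -> Prop) : nat := epsilon (inhabits 0) (is_card S).

Definition setI (A B : V -> Prop) : V -> Prop := fun x => A x /\ B x.
Definition setD (A B : V -> Prop) : V -> Prop := fun x => A x /\ ~ B x.

Variable E : V -> V -> Prop.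
Definition reflexive_graph : Prop := forall x, E x x.
Definition locally_finite : Prop := forall x, fin (E x).

Definition nbhd (A : V -> Prop) : V -> Prop := fun y => exists x, A x /\ E x y.
Definition bdry (A : V -> Prop) : V -> Prop := setD (nbhd A) A.
Definition wedge (A : V -> Prop) : V -> Prop := fun y => ~ A y /\ ~ nbhd A y.

Definition sep_cand (j : nat) (X : V -> Prop) : Prop :=
  fin X /\ j <= ncard X /\ card_ge (fun y => ~ nbhd X y) j.
Definition separable (j : nat) : Prop := exists X, sep_cand j X.
Definition kappa (j : nat) : nat :=
  epsilon (inhabits 0) (fun n =>
    (exists X, sep_cand j X /\ ncard (bdry X) = n) /\
    forall X, sep_cand j X -> n <= ncard (bdry X)).
Definition fragment (j : nat) (X : V -> Prop) : Prop :=
  sep_cand j X /\ ncard (bdry X) = kappa j.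
End Graphs.

(* Every vertex of Gamma(A) \cup Gamma(F) lies in one of eight cells, according
   to whether it is in A, in the boundary of A, or in A^wedge, and likewise for
   F.  All quantities in the theorem are sums of cell sizes, so the proof is a
   piece of bookkeeping on top of two extremality arguments:
   - A \cap F is a (k-1)-separating set, hence kappa_{k-1} <= |boundary(A \cap F)|;
   - if |A \cap boundary F| > |boundary A \cap F^wedge|, then A \cup F is a
     k-separating set whose boundary is smaller than kappa_k, which is absurd. *)
From Stdlib Require Import List Arith Wf_nat ClassicalEpsilon.
From Stdlib Require Import Classical Lia.
Import ListNotations.

Section FiniteCounting.
Context {V : Type}.
Implicit Types (S T : V -> Prop) (l : list V).

Definition holds (P : Prop) : bool :=
  if excluded_middle_informative P then true else false.

Lemma holds_true (P : Prop) : holds P = true <-> P.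
Proof. unfold holds; destruct excluded_middle_informative; split; easy. Qed.

Lemma holds_false (P : Prop) : negb (holds P) = true <-> ~ P.
Proof. unfold holds; destruct excluded_middle_informative; split; easy. Qed.

Lemma fin_is_card S : fin S -> is_card S (ncard S).
Proof.
  intros [l Hl].
  apply (epsilon_spec (inhabits 0) (is_card S)).
  pose (eqdec := fun x y : V => excluded_middle_informative (x = y)).
  exists (length (nodup eqdec l)), (nodup eqdec l).
  split; [apply NoDup_nodup | split; [reflexivity |]].
  intro x; rewrite nodup_In; apply Hl.
Qed.

Lemma ncard_is S n : is_card S n -> ncard S = n.
Proof.
  intros [l [ND [<- Hl]]].
  destruct (fin_is_card S (ex_intro _ l Hl)) as [l' [ND' [<- Hl']]].
  apply Nat.le_antisymm; apply NoDup_incl_length; [exact ND' | | exact ND |];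
    intros x Hx; [apply Hl, Hl' | apply Hl', Hl]; exact Hx.
Qed.

Lemma fin_sub S T : fin S -> (forall x, T x -> S x) -> fin T.
Proof.
  intros [l Hl] HTS. exists (filter (fun x => holds (T x)) l).
  intro x; rewrite filter_In, holds_true, <- Hl; firstorder.
Qed.

Lemma fin_union S T : fin S -> fin T -> fin (fun x => S x \/ T x).
Proof.
  intros [l Hl] [l' Hl']. exists (l ++ l').
  intro x; rewrite in_app_iff, <- Hl, <- Hl'; reflexivity.
Qed.

Lemma ncard_disjoint_union S (T1 T2 : V -> Prop) :
  fin S -> (forall x, S x <-> T1 x \/ T2 x) -> (forall x, T1 x -> ~ T2 x) ->
  ncard S = ncard T1 + ncard T2.
Proof.
  intros finS HS Hdisj.
  destruct (fin_is_card S finS) as [l [ND [Hlen Hl]]].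
  pose (t1 := fun x => holds (T1 x)).
  assert (C1 : is_card T1 (length (filter t1 l))).
  { exists (filter t1 l); split; [apply NoDup_filter, ND | split; [reflexivity |]].
    intro x; unfold t1; rewrite filter_In, holds_true, <- Hl, HS; tauto. }
  assert (C2 : is_card T2 (length (filter (fun x => negb (t1 x)) l))).
  { exists (filter (fun x => negb (t1 x)) l).
    split; [apply NoDup_filter, ND | split; [reflexivity |]].
    intro x; unfold t1; rewrite filter_In, holds_false, <- Hl, HS.
    specialize (Hdisj x); tauto. }
  rewrite (ncard_is _ _ C1), (ncard_is _ _ C2), filter_length; symmetry; exact Hlen.
Qed.

Lemma ncard_mono S T : fin T -> (forall x, S x -> T x) -> ncard S <= ncard T.
Proof.
  intros finT HST.
  rewrite (ncard_disjoint_union T S (fun x => T x /\ ~ S x)); [lia | exact finT | |].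
  - intro x; destruct (classic (S x)); firstorder.
  - tauto.
Qed.

Lemma nodup_length_le_ncard S l :
  fin S -> NoDup l -> (forall x, In x l -> S x) -> length l <= ncard S.
Proof.
  intros finS ND Hl.
  destruct (fin_is_card S finS) as [l' [_ [<- Hl']]].
  apply NoDup_incl_length; [exact ND |]; intros x Hx; apply Hl', Hl, Hx.
Qed.

Lemma card_ge_of_list S l m :
  NoDup l -> m <= length l -> (forall x, In x l -> S x) -> card_ge S m.
Proof.
  intros ND Hm Hl. exists (firstn m l).
  assert (Hsplit := firstn_skipn m l).
  split; [apply (NoDup_app_remove_r _ (skipn m l)); rewrite Hsplit; exact ND |].
  split; [apply firstn_length_le, Hm |].
  intros x Hx; apply Hl; rewrite <- Hsplit; apply in_or_app; left; exact Hx.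
Qed.

Lemma card_ge_weaken S T n m :
  card_ge S n -> m <= n -> (forall x, S x -> T x) -> card_ge T m.
Proof.
  intros [l [ND [Hlen Hl]]] Hm HST.
  apply (card_ge_of_list T l); [exact ND | lia | intros x Hx; apply HST, Hl, Hx].
Qed.

Lemma card_ge_diff S T n :
  card_ge S n -> fin T ->
  card_ge (fun x => S x /\ ~ T x) (n - ncard (fun x => S x /\ T x)).
Proof.
  intros [l [ND [Hlen Hl]]] finT.
  pose (t := fun x => holds (T x)).
  assert (Hin : length (filter t l) <= ncard (fun x => S x /\ T x)).
  { apply nodup_length_le_ncard; [apply (fin_sub T); firstorder | apply NoDup_filter, ND |].
    intros x Hx; unfold t in Hx; rewrite filter_In, holds_true in Hx; firstorder. }
  apply (card_ge_of_list _ (filter (fun x => negb (t x)) l)).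
  - apply NoDup_filter, ND.
  - pose proof (filter_length t l); lia.
  - intros x Hx; unfold t in Hx; rewrite filter_In, holds_false in Hx; firstorder.
Qed.

End FiniteCounting.

Section GraphBasics.
Context {V : Type} (E : V -> V -> Prop).

Lemma fin_nbhd A : locally_finite E -> fin A -> fin (nbhd E A).
Proof.
  intros lf [l Hl].
  assert (Hlist : forall xs, fin (fun y => exists x, In x xs /\ E x y)).
  { induction xs as [|a xs [l' IH]].
    - exists []; intro y; simpl; firstorder.
    - destruct (lf a) as [la Ha]. exists (la ++ l').
      intro y; rewrite in_app_iff, <- IH, <- Ha; simpl; firstorder congruence. }
  apply (fin_sub _ _ (Hlist l)); unfold nbhd; firstorder.
Qed.

Lemma nbhd_incl A : reflexive_graph E -> forall x, A x -> nbhd E A x.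
Proof. intros refl x Ax; exists x; auto. Qed.

Lemma nbhd_inter A F y : nbhd E (setI A F) y -> nbhd E A y /\ nbhd E F y.
Proof. unfold nbhd, setI; firstorder. Qed.

Lemma nbhd_union A F y : nbhd E (fun x => A x \/ F x) y <-> nbhd E A y \/ nbhd E F y.
Proof. unfold nbhd; firstorder. Qed.

Lemma kappa_le j X : sep_cand E j X -> kappa E j <= ncard (bdry E X).
Proof.
  intros HX. unfold kappa.
  match goal with |- epsilon ?i ?P <= _ =>
    assert (HP : exists n, P n); [| apply (proj2 (epsilon_spec i P HP)), HX] end.
  destruct (dec_inh_nat_subset_has_unique_least_element
              (fun n => exists X, sep_cand E j X /\ ncard (bdry E X) = n))
    as [n [[Hn Hmin] _]]; [intro n; apply classic | eauto |].
  exists n; split; [exact Hn | intros X' HX'; apply Hmin; eauto].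
Qed.

End GraphBasics.

Section Cells.
Context {V : Type} (E : V -> V -> Prop) (A F : V -> Prop).
Hypotheses (refl : reflexive_graph E) (lf : locally_finite E) (finA : fin A) (finF : fin F).
#[local] Set Default Proof Using "All".

Let finGA : fin (nbhd E A) := fin_nbhd E A lf finA.
Let finGF : fin (nbhd E F) := fin_nbhd E F lf finF.
Let inGA : forall x, A x -> nbhd E A x := nbhd_incl E A refl.
Let inGF : forall x, F x -> nbhd E F x := nbhd_incl E F refl.

(* Membership in the cells is decided by A x, F x, nbhd A x and nbhd F x. *)
Local Ltac cells :=
  let x := fresh "x" in
  intro x; pose proof (inGA x); pose proof (inGF x);
  cbv [setI setD bdry wedge] in *; rewrite ?nbhd_union;
  destruct (classic (nbhd E A x)), (classic (nbhd E F x)); tauto.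

(* Every set met below lies inside nbhd A \cup nbhd F, hence is finite. *)
Local Ltac finite :=
  first [ assumption
        | apply (fin_sub _ _ finGA); cells
        | apply (fin_sub _ _ finGF); cells
        | apply (fin_sub _ _ (fin_union _ _ finGA finGF)); cells ].

Local Ltac side := first [cells | finite].

Lemma card_A_cells :
  ncard A = ncard (setI A F) + ncard (setI A (bdry E F)) + ncard (setI A (wedge E F)).
Proof.
  rewrite (ncard_disjoint_union A (setI A F) (fun x => setI A (bdry E F) x \/ setI A (wedge E F) x)),
    (ncard_disjoint_union (fun x => setI A (bdry E F) x \/ setI A (wedge E F) x)
       (setI A (bdry E F)) (setI A (wedge E F))); try lia; side.
Qed.

Lemma card_A_minus_F :
  ncard (setD A F) = ncard (setI A (bdry E F)) + ncard (setI A (wedge E F)).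
Proof. apply ncard_disjoint_union; side. Qed.

Lemma card_wedge_minus_wedge :
  ncard (setD (wedge E F) (wedge E A))
  = ncard (setI A (wedge E F)) + ncard (setI (bdry E A) (wedge E F)).
Proof. apply ncard_disjoint_union; side. Qed.

(* Both boundary(A \cup F) and boundary F contain the cell
   boundary F \ A; the remaining parts are boundary A \cap F^wedge and
   A \cap boundary F respectively. *)
Lemma card_bdry_union :
  ncard (bdry E (fun x => A x \/ F x)) + ncard (setI A (bdry E F))
  = ncard (bdry E F) + ncard (setI (bdry E A) (wedge E F)).
Proof.
  rewrite (ncard_disjoint_union (bdry E (fun x => A x \/ F x))
             (setI (bdry E A) (wedge E F)) (setD (bdry E F) A)),
          (ncard_disjoint_union (bdry E F) (setI A (bdry E F)) (setD (bdry E F) A));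
    try lia; side.
Qed.

(* nbhd A \cap nbhd F splits into A \cap F, A \cap boundary F and
   boundary A \cap nbhd F, while boundary A splits into boundary A \cap nbhd F
   and boundary A \cap F^wedge. *)
Lemma card_nbhd_inter :
  ncard (setI (nbhd E A) (nbhd E F)) + ncard (setI (bdry E A) (wedge E F))
  = ncard (setI A F) + ncard (setI A (bdry E F)) + ncard (bdry E A).
Proof.
  rewrite (ncard_disjoint_union (setI (nbhd E A) (nbhd E F))
             (setI A (nbhd E F)) (setI (bdry E A) (nbhd E F))),
          (ncard_disjoint_union (setI A (nbhd E F)) (setI A F) (setI A (bdry E F))),
          (ncard_disjoint_union (bdry E A) (setI (bdry E A) (nbhd E F))
             (setI (bdry E A) (wedge E F)));
    try lia; side.
Qed.

(* The boundary of A \cap F lies in (nbhd A \cap nbhd F) \ (A \cap F). *)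
Lemma card_bdry_inter :
  ncard (bdry E (setI A F)) + ncard (setI A F) <= ncard (setI (nbhd E A) (nbhd E F)).
Proof.
  rewrite (ncard_disjoint_union (setI (nbhd E A) (nbhd E F)) (setI A F)
             (setD (setI (nbhd E A) (nbhd E F)) (setI A F))); try side.
  enough (ncard (bdry E (setI A F)) <= ncard (setD (setI (nbhd E A) (nbhd E F)) (setI A F)))
    by lia.
  apply ncard_mono; [finite |].
  intros x [Hx HnAF]; split; [apply nbhd_inter, Hx | exact HnAF].
Qed.

(* A \cap F inherits separation from A: its neighbourhood is smaller. *)
Lemma inter_sep_cand j :
  j <= ncard (setI A F) -> card_ge (fun y => ~ nbhd E A y) j -> sep_cand E j (setI A F).
Proof.
  intros Hj HA. split; [finite | split; [exact Hj |]].
  apply (card_ge_weaken _ _ j j HA (le_n j)).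
  intros y HnA HAF; apply HnA, (nbhd_inter E A F y HAF).
Qed.

(* A \cup F is j-separating as soon as F^wedge is at least as large as A and
   A \cap F together with A \cap boundary F outweighs
   boundary A \cap F^wedge by j: the vertices of F^wedge outside nbhd A are
   not adjacent to A \cup F. *)
Lemma union_sep_cand j :
  j <= ncard A -> card_ge (wedge E F) (ncard A) ->
  j + ncard (setI (bdry E A) (wedge E F)) <= ncard (setI A F) + ncard (setI A (bdry E F)) ->
  sep_cand E j (fun x => A x \/ F x).
Proof.
  intros HjA Hw Hcount. split; [apply fin_union; assumption | split].
  - apply (Nat.le_trans _ _ _ HjA), ncard_mono; [apply fin_union; assumption | tauto].
  - assert (Hfar := card_ge_diff (wedge E F) (nbhd E A) (ncard A) Hw finGA).
    rewrite (ncard_disjoint_union (fun x => wedge E F x /\ nbhd E A x)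
               (setI A (wedge E F)) (setI (bdry E A) (wedge E F))), card_A_cells in Hfar;
      try side.
    apply (card_ge_weaken _ _ _ j Hfar); [lia |].
    intros y [HwF HnA]; rewrite nbhd_union; cbv [wedge] in HwF; tauto.
Qed.

End Cells.

Theorem mainTheorem16 (V : Type) (E : V -> V -> Prop) (k : nat) :
  2 <= k -> reflexive_graph E -> locally_finite E -> separable E k ->
  forall A F : V -> Prop,
    fragment E k A -> fragment E k F ->
    card_ge (wedge E F) (ncard A) ->
    k - 1 <= ncard (setI A F) ->
    ncard (setI A (bdry E F)) <= ncard (setI (bdry E A) (wedge E F)) /\
    ncard (setI (nbhd E A) (nbhd E F)) <= ncard (setI A F) + kappa E k /\
    ncard (setD (wedge E F) (wedge E A)) + kappa E (k - 1)
      <= ncard (setD A F) + kappa E k.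
Proof.
  intros Hk refl lf _ A F [[finA [kA wA]] bdryA] [[finF _] bdryF] Hw HAF.
  (* If A \cap boundary F were larger than boundary A \cap F^wedge, then
     A \cup F would be k-separating with a boundary smaller than kappa_k. *)
  assert (exchange : ncard (setI A (bdry E F)) <= ncard (setI (bdry E A) (wedge E F))).
  { destruct (le_lt_dec (ncard (setI A (bdry E F))) (ncard (setI (bdry E A) (wedge E F))))
      as [Hle | Hgt]; [exact Hle | exfalso].
    assert (Hsep : sep_cand E k (fun x => A x \/ F x))
      by (apply union_sep_cand; auto; lia).
    pose proof (kappa_le E k _ Hsep).
    pose proof (card_bdry_union E A F refl lf finA finF).
    lia. }
  assert (Hinter : kappa E (k - 1) <= ncard (bdry E (setI A F))).
  { apply kappa_le, inter_sep_cand; auto.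
    apply (card_ge_weaken _ _ k _ wA); [lia | tauto]. }
  pose proof (card_nbhd_inter E A F refl lf finA finF).
  pose proof (card_bdry_inter E A F refl lf finA finF).
  pose proof (card_A_minus_F E A F refl lf finA finF).
  pose proof (card_wedge_minus_wedge E A F refl lf finA finF).
  lia.
Qed.
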